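(* Let $r\in(1,2)$. Let $Z$ be a random variable with values in $\mathbb{N}$ and $X$ a nonnegative real random variable with $\mathbb{E}[X^r]+\mathbb{E}[Z^r]<+\infty$. Write $L_Z(\xi)=\mathbb{E}[e^{-\xi Z}]$ and $k_X(\xi)=\log\mathbb{E}[e^{-\xi X}]$. Then there is a positive constant $C=C(X)$, depending only on $X$ (and $r$), such that for all $\xi>0$ $$|L_Z(-k_X(\xi))-L_Z(\xi\mathbb{E}[X])|\,\xi^{-r}\le C(X)\big[1+\mathbb{E}[Z^r]\big].$$ *)

From HB Require Import structures.
From mathcomp Require Import all_boot all_order all_algebra.
From mathcomp Require Import all_classical all_reals all_analysis.
Set Implicit Arguments. Unset Strict Implicit. Unset Printing Implicit Defensive.
Import Order.TTheory GRing.Theory Num.Theory.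
Local Open Scope ring_scope.

(* Expectation of a real random variable (as a real number; used only for
   integrable / finite-moment variables). *)
Definition expect (R : realType) (d : measure_display) (T : measurableType d)
  (P : probability T R) (X : T -> R) : R :=
  fine (\int[P]_x (X x)%:E).

Definition laplace (R : realType) (d : measure_display) (T : measurableType d)
  (P : probability T R) (X : T -> R) (s : R) : R :=
  expect P (fun x => expR (- s * X x)).

Definition loglaplace (R : realType) (d : measure_display) (T : measurableType d)
  (P : probability T R) (X : T -> R) (s : R) : R :=
  ln (laplace P X s).

From HB Require Import structures.
From mathcomp Require Import all_boot all_order all_algebra.
From mathcomp Require Import all_classical all_reals all_analysis.
From mathcomp Require Import ring lra measurable_realfun.
Set Implicit Arguments. Unset Strict Implicit. Unset Printing Implicit Defensive.
Import Order.TTheory GRing.Theory Num.Theory.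
Local Open Scope ring_scope.

(* Write a := -k_X(xi) and c := xi E[X].  Jensen's inequality and L_X(xi) <= 1
   give 0 <= a <= c.  Integrating e^{-u} <= 1 - u + u^r, valid for
   1 <= r <= 2, gives L_X(xi) <= 1 - c + xi^r E[X^r], hence
   c - a <= xi^r E[X^r] because ln y <= y - 1.  Finally the pointwise bound
   0 <= e^{-a n} - e^{-c n} <= (c - a) n <= (c - a)(1 + n^r) integrates to
   0 <= L_Z(a) - L_Z(c) <= (c - a)(1 + E[Z^r]), so C := E[X^r] + 1 works. *)

Section exponential_bounds.
Variable R : realType.

Lemma le_1D_powR (r x : R) : 1 <= r -> 0 <= x -> x <= 1 + x `^ r.
Proof.
move=> r1 x0; have [x1|x1] := leP x 1.
  by have := powR_ge0 x r; lra.
by have := le1r_powR (ltW x1) r1; lra.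
Qed.

Lemma expRN_le_1D_sqr (u : R) : 0 <= u -> expR (- u) <= 1 - u + u ^+ 2.
Proof.
move=> u0; have u1 : 0 < 1 + u by lra.
have : expR (- u) <= (1 + u)^-1.
  by rewrite expRN lef_pV2 ?posrE ?expR_gt0 //; exact: expR_ge1Dx.
move/le_trans; apply.
by rewrite -[(1 + u)^-1]mul1r ler_pdivrMr //; nra.
Qed.

Lemma expRN_le_1D_powR (r u : R) : 1 <= r <= 2 -> 0 <= u ->
  expR (- u) <= 1 - u + u `^ r.
Proof.
case/andP=> r1 r2 u0; have [u1|u1] := leP u 1.
  apply: (le_trans (expRN_le_1D_sqr u0)).
  rewrite lerD2l.
  have [->|u_neq0] := eqVneq u 0; first by rewrite expr0n powR_ge0.
  by rewrite -powR_mulrn // ger_powR // lt_def u_neq0 u0 u1.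
have : u <= u `^ r by exact: le1r_powR (ltW u1) r1.
have : expR (- u) <= 1 by rewrite -expR0 ler_expR; lra.
lra.
Qed.

Lemma expRN_sub_bounds (a c n : R) : 0 <= a -> a <= c -> 0 <= n ->
  0 <= expR (- a * n) - expR (- c * n) <= (c - a) * n.
Proof.
move=> a0 ac n0; set u := (c - a) * n.
have u0 : 0 <= u by apply: mulr_ge0; lra.
have -> : expR (- c * n) = expR (- a * n) * expR (- u).
  by rewrite -expRD; congr expR; rewrite /u; ring.
have ea0 := expR_gt0 (- a * n).
have ea1 : expR (- a * n) <= 1.
  by rewrite -expR0 ler_expR mulNr oppr_le0 mulr_ge0.
have eu1 : expR (- u) <= 1 by rewrite -expR0 ler_expR; lra.
have eu := expR_ge1Dx (- u).
by apply/andP; split; nra.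
Qed.

End exponential_bounds.

Section measure_integrals.
Context {R : realType} {d : measure_display} {T : measurableType d}
  {mu : {measure set T -> \bar R}}.
Implicit Types (f g : T -> R) (k : R).

Lemma integrableD_EFin f g : mu.-integrable setT (EFin \o f) ->
  mu.-integrable setT (EFin \o g) -> mu.-integrable setT (EFin \o (f \+ g)).
Proof. by move=> fi gi; apply: eq_integrable (integrableD _ fi gi). Qed.

Lemma integrableB_EFin f g : mu.-integrable setT (EFin \o f) ->
  mu.-integrable setT (EFin \o g) -> mu.-integrable setT (EFin \o (f \- g)).
Proof. by move=> fi gi; apply: eq_integrable (integrableB _ fi gi). Qed.

Lemma integrableZl_EFin k f : mu.-integrable setT (EFin \o f) ->
  mu.-integrable setT (EFin \o (fun x => k * f x)).
Proof. by move=> fi; apply: eq_integrable (integrableZl _ k fi). Qed.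

Lemma ge0_integrable_EFin f : measurable_fun setT f -> (forall x, 0 <= f x) ->
  (\int[mu]_x (f x)%:E < +oo)%E -> mu.-integrable setT (EFin \o f).
Proof.
move=> mf f0 fi; apply/integrableP; split; first exact/measurable_EFinP.
by under eq_integral do rewrite /= ger0_norm //.
Qed.

Lemma integrable_powR r f : measurable_fun setT f -> (forall x, 0 <= f x) ->
  (\int[mu]_x (f x `^ r)%:E < +oo)%E ->
  mu.-integrable setT (EFin \o (fun x => f x `^ r)).
Proof.
move=> mf f0 fr; apply: ge0_integrable_EFin => // [|x]; last exact: powR_ge0.
exact: measurableT_comp (measurable_powR r) mf.
Qed.

End measure_integrals.

Section finite_measure_integrals.
Context {R : realType} {d : measure_display} {T : measurableType d}
  {mu : {finite_measure set T -> \bar R}}.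
Implicit Types (f : T -> R) (k : R).

Lemma integrable_cst_EFin k : mu.-integrable setT (EFin \o cst k).
Proof. exact: finite_measure_integrable_cst. Qed.

Lemma integrable_le_cst_EFin f k : measurable_fun setT f ->
  (forall x, `|f x| <= k) -> mu.-integrable setT (EFin \o f).
Proof.
move=> mf fk; apply: (le_integrable _ _ _ (integrable_cst_EFin k)) => //.
- exact/measurable_EFinP.
- by move=> x _; rewrite /= lee_fin (le_trans (fk x)) // ler_norm.
Qed.

Lemma integrable_of_powR_moment r f : 1 <= r ->
  measurable_fun setT f -> (forall x, 0 <= f x) ->
  (\int[mu]_x (f x `^ r)%:E < +oo)%E -> mu.-integrable setT (EFin \o f).
Proof.
move=> r1 mf f0 fr.
have i1fr := integrableD_EFin (integrable_cst_EFin 1) (integrable_powR mf f0 fr).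
apply: (le_integrable _ _ _ i1fr) => //; first exact/measurable_EFinP.
move=> x _; rewrite /= lee_fin ger0_norm // ger0_norm ?le_1D_powR //.
by rewrite addr_ge0 ?powR_ge0.
Qed.

End finite_measure_integrals.

Lemma Rintegral_cst_probability (R : realType) (d : measure_display)
    (T : measurableType d) (P : probability T R) (k : R) :
  \int[P]_(_ in setT) k = k.
Proof. by rewrite Rintegral_cst // [fine _](congr1 fine (probability_setT P)) mulr1. Qed.

Section laplace_transform.
Context {R : realType} {d : measure_display} {T : measurableType d}.
Variables (P : probability T R) (X : T -> R).
Hypotheses (mX : measurable_fun setT X) (X_ge0 : forall t, 0 <= X t).

Lemma measurable_expRN s : measurable_fun setT (fun t => expR (- s * X t)).
Proof. exact: measurableT_comp (measurableT_comp (mulrl_measurable _) mX). Qed.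

Lemma expRN_le1 s t : 0 <= s -> expR (- s * X t) <= 1.
Proof. by move=> s0; rewrite -expR0 ler_expR mulNr oppr_le0 mulr_ge0. Qed.

Lemma integrable_expRN s : 0 <= s ->
  P.-integrable setT (EFin \o (fun t => expR (- s * X t))).
Proof.
move=> s0; apply: (integrable_le_cst_EFin (k := 1) (measurable_expRN s)) => t.
by rewrite ger0_norm ?expR_ge0 ?expRN_le1.
Qed.

Lemma laplace_le1 s : 0 <= s -> laplace P X s <= 1.
Proof.
move=> s0; rewrite -[leRHS](Rintegral_cst_probability P).
apply: le_Rintegral => //; first exact: integrable_expRN.
  exact: integrable_cst_EFin.
by move=> t _; exact: expRN_le1.
Qed.

Lemma expR_expect_le_laplace s : 0 <= s -> P.-integrable setT (EFin \o X) ->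
  expR (- (s * expect P X)) <= laplace P X s.
Proof.
move=> s0 iX; set c := s * expect P X.
have iXs := integrableZl_EFin (expR (- c) * s) iX.
(* the integrand lies above the tangent line of expR at -c *)
apply: (@le_trans _ _ (\int[P]_(t in setT)
    (expR (- c) * (1 + c) - expR (- c) * s * X t))).
  rewrite RintegralB // ?integrable_cst_EFin //.
  rewrite Rintegral_cst_probability RintegralZl // -mulrA.
  by rewrite [\int[P]__ _](_ : _ = expect P X) // -/c mulrDr mulr1; lra.
rewrite /laplace /expect; apply: le_Rintegral => //.
- exact: integrableB_EFin (integrable_cst_EFin _) iXs.
- exact: integrable_expRN.
move=> t _; have := expR_ge1Dx (c - s * X t).
have -> : expR (- s * X t) = expR (- c) * expR (c - s * X t).
  by rewrite -expRD; congr expR; ring.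
by have := expR_gt0 (- c); nra.
Qed.

Lemma laplace_le_powR_moment r s : 1 <= r <= 2 -> 0 <= s ->
  P.-integrable setT (EFin \o X) ->
  P.-integrable setT (EFin \o (fun t => X t `^ r)) ->
  laplace P X s <= 1 - s * expect P X + s `^ r * expect P (fun t => X t `^ r).
Proof.
move=> r12 s0 iX iXr.
have iXs := integrableZl_EFin s iX.
have iXrs := integrableZl_EFin (s `^ r) iXr.
have i1Xs := integrableB_EFin (integrable_cst_EFin 1) iXs.
apply: (@le_trans _ _ (\int[P]_(t in setT) ((1 - s * X t) + s `^ r * X t `^ r))).
  apply: le_Rintegral => //; first exact: integrable_expRN.
    exact: integrableD_EFin.
  move=> t _; rewrite -powRM // mulNr.
  by apply: expRN_le_1D_powR; rewrite // mulr_ge0.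
rewrite RintegralD // RintegralB // ?integrable_cst_EFin //.
by rewrite Rintegral_cst_probability !RintegralZl.
Qed.

Lemma loglaplace_bounds r s : 1 <= r <= 2 -> 0 <= s ->
  (\int[P]_t (X t `^ r)%:E < +oo)%E ->
  [/\ 0 <= - loglaplace P X s, - loglaplace P X s <= s * expect P X
    & s * expect P X + loglaplace P X s <= s `^ r * expect P (fun t => X t `^ r)].
Proof.
move=> r12 s0 Xr; have /andP[r1 _] := r12.
have iX := integrable_of_powR_moment r1 mX X_ge0 Xr.
have iXr := integrable_powR mX X_ge0 Xr.
have Lup := laplace_le_powR_moment r12 s0 iX iXr.
have Llow := expR_expect_le_laplace s0 iX.
have L1 := laplace_le1 s0.
have L0 : 0 < laplace P X s by apply: lt_le_trans Llow; exact: expR_gt0.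
have ln_low : - (s * expect P X) <= loglaplace P X s.
  by rewrite -[leLHS]expRK ler_ln ?posrE ?expR_gt0.
have ln_up : loglaplace P X s <= laplace P X s - 1.
  by have := @le_ln1Dx _ (laplace P X s - 1) ltac:(lra); rewrite addrC subrK.
have ln_le0 : loglaplace P X s <= 0 by exact: ln_le0.
by split; lra.
Qed.

End laplace_transform.

Lemma laplace_sub_bounds (R : realType) (d : measure_display)
    (T : measurableType d) (Q : probability T R) (W : T -> R) (r a c : R) :
  measurable_fun setT W -> (forall t, 0 <= W t) -> 1 <= r ->
  (\int[Q]_t (W t `^ r)%:E < +oo)%E -> 0 <= a -> a <= c ->
  0 <= laplace Q W a - laplace Q W c <= (c - a) * (1 + expect Q (fun t => W t `^ r)).
Proof.
move=> mW W0 r1 Wr a0 ac.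
have iWr := integrable_powR mW W0 Wr.
have i1Wr := integrableD_EFin (integrable_cst_EFin 1) iWr.
have pointwise t : 0 <= expR (- a * W t) - expR (- c * W t) <=
    (c - a) * (1 + W t `^ r).
  have /andP[diff0 diff_le] := expRN_sub_bounds a0 ac (W0 t).
  rewrite diff0 (le_trans diff_le) // ler_wpM2l ?le_1D_powR //; lra.
have -> : laplace Q W a - laplace Q W c =
    \int[Q]_(t in setT) (expR (- a * W t) - expR (- c * W t)).
  by rewrite RintegralB // integrable_expRN //; lra.
apply/andP; split; first by apply: Rintegral_ge0 => t _; case/andP: (pointwise t).
apply: (@le_trans _ _ (\int[Q]_(t in setT) ((c - a) * (1 + W t `^ r)))).
  apply: le_Rintegral => //; last by move=> t _; case/andP: (pointwise t).
    by apply: integrableB_EFin; apply: integrable_expRN => //; lra.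
  exact: integrableZl_EFin.
by rewrite RintegralZl // RintegralD ?integrable_cst_EFin // Rintegral_cst_probability.
Qed.

Theorem lemmaA4 (R : realType) (r : R) (hr1 : 1 < r) (hr2 : r < 2)
  (d : measure_display) (T : measurableType d) (P : probability T R)
  (X : T -> R) (mX : measurable_fun setT X) (X_ge0 : forall t, 0 <= X t)
  (hXr : (\int[P]_t ((X t) `^ r)%:E < +oo)%E) :
  exists C : R, 0 < C /\
    forall (d' : measure_display) (T' : measurableType d')
           (Q : probability T' R) (Z : T' -> nat),
      measurable_fun setT (fun t => (Z t)%:R : R) ->
      (\int[Q]_t (((Z t)%:R : R) `^ r)%:E < +oo)%E ->
      forall xi : R, 0 < xi ->
        `| laplace Q (fun t => (Z t)%:R) (- loglaplace P X xi)
           - laplace Q (fun t => (Z t)%:R) (xi * expect P X) | * xi `^ (- r)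
        <= C * (1 + expect Q (fun t => ((Z t)%:R : R) `^ r)).
Proof.
have r12 : 1 <= r <= 2 by rewrite !ltW.
set M := expect P (fun t => X t `^ r).
have M0 : 0 <= M by apply: Rintegral_ge0 => t _; exact: powR_ge0.
exists (M + 1); split; first lra.
move=> d' T' Q Z mZ Zr xi xi0.
have [a0 ac caM] := loglaplace_bounds mX X_ge0 r12 (ltW xi0) hXr.
rewrite -/M in caM.
have /andP[D0 D_le] := laplace_sub_bounds mZ (fun t => ler0n _ _) (ltW hr1) Zr
  a0 ac.
set EZ := expect Q _ in D_le *.
have EZ0 : 0 <= EZ by apply: Rintegral_ge0 => t _; exact: powR_ge0.
have xir_inv : xi `^ r * xi `^ (- r) = 1 by rewrite powRN mulfV // gt_eqF ?powR_gt0.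
have diff_le : laplace Q (fun t => (Z t)%:R) (- loglaplace P X xi)
    - laplace Q (fun t => (Z t)%:R) (xi * expect P X) <= xi `^ r * M * (1 + EZ).
  by apply: (le_trans D_le); rewrite ler_wpM2r //; lra.
rewrite ger0_norm // (le_trans (ler_wpM2r (powR_ge0 _ _) diff_le)) //.
have -> : xi `^ r * M * (1 + EZ) * xi `^ (- r) = M * (1 + EZ) * (xi `^ r * xi `^ (- r)).
  by ring.
by rewrite xir_inv mulr1 ler_wpM2r //; lra.
Qed.
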